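(* Let $G$ be a weighted finite graph and let $f_1,\ldots,f_k:V\to\mathbb{R}$ be orthonormal in $l^2(V,\mu)$. Let $F:V\to\mathbb{R}^k$, $F(v)=(f_1(v),\ldots,f_k(v))$. If $S\subseteq V$ satisfies $\mathrm{diam}(S\cap\widetilde{V}_F,\overline{d}_F)\leq r$ for some $0<r<1$, then \[ \mathcal{E}_S\leq\frac{1}{k(1-r^2)}\mathcal{E}_V. \]
   Context: $G=(V,E,w)$ is a finite undirected graph with positive symmetric edge weights, degrees $d_u=\sum_vw_{uv}$, and measure $\mu(u)=d_u$; $l^2(V,\mu)$ has inner product $(f,g)_\mu=\sum_u\mu(u)f(u)g(u)$. For $S\subseteq V$, $\mathcal{E}_S:=\sum_{u\in S}\mu(u)\|F(u)\|^2$ (Euclidean norm). $\widetilde{V}_F:=\{v\in V:F(v)\neq0\}$, and for $u,v\in\widetilde{V}_F$, \[ \overline{d}_F(u,v):=\min\left\{\left\|\tfrac{F(u)}{\|F(u)\|}-\tfrac{F(v)}{\|F(v)\|}\right\|,\left\|\tfrac{F(u)}{\|F(u)\|}+\tfrac{F(v)}{\|F(v)\|}\right\|\right\}, \] a pseudometric on $\widetilde{V}_F$; $\mathrm{diam}$ is the supremum of $\overline{d}_F$ over pairs of points of the set. *)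

From mathcomp Require Import all_boot all_order all_algebra.
From mathcomp Require Import reals.
Set Implicit Arguments. Unset Strict Implicit. Unset Printing Implicit Defensive.
Import Order.TTheory GRing.Theory Num.Theory.
Local Open Scope ring_scope.

Section Defs.
Variables (R : realType) (V : finType).

(* weighted graph: symmetric nonnegative weights, w u v > 0 iff uv is an edge *)
Definition weighted_graph (w : V -> V -> R) : Prop :=
  (forall u v, w u v = w v u) /\ (forall u v, 0 <= w u v).

Definition deg (w : V -> V -> R) (u : V) : R := \sum_(v : V) w u v.

Definition mu (w : V -> V -> R) (u : V) : R := deg w u.

Definition inner_mu (w : V -> V -> R) (f g : V -> R) : R :=
  \sum_(u : V) mu w u * f u * g u.

Variable k : nat.

Definition Fvec (f : 'I_k -> V -> R) (v : V) : 'I_k -> R := fun i => f i v.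

Definition enorm (x : 'I_k -> R) : R := Num.sqrt (\sum_(i < k) x i ^+ 2).

Definition orthonormal_mu (w : V -> V -> R) (f : 'I_k -> V -> R) : Prop :=
  forall i j : 'I_k, inner_mu w (f i) (f j) = (i == j)%:R.

Definition energy (w : V -> V -> R) (f : 'I_k -> V -> R) (S : {set V}) : R :=
  \sum_(u in S) mu w u * enorm (Fvec f u) ^+ 2.

Definition support_F (f : 'I_k -> V -> R) : {set V} :=
  [set v | [exists i, f i v != 0]].

Definition normalized (f : 'I_k -> V -> R) (u : V) : 'I_k -> R :=
  fun i => f i u / enorm (Fvec f u).

Definition dbar (f : 'I_k -> V -> R) (u v : V) : R :=
  Num.min (enorm (fun i => normalized f u i - normalized f v i))
          (enorm (fun i => normalized f u i + normalized f v i)).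

Definition diam_le (f : 'I_k -> V -> R) (A : {set V}) (r : R) : Prop :=
  forall u v, u \in A -> v \in A -> dbar f u v <= r.

End Defs.

From mathcomp Require Import all_boot all_order all_algebra.
From mathcomp Require Import reals.
From mathcomp Require Import ring lra.
Import Order.TTheory GRing.Theory Num.Theory.
Set Implicit Arguments. Unset Strict Implicit.
Local Open Scope ring_scope.

(* Pick u in the cluster A = S ∩ Ṽ_F and let x = F(u)/|F(u)|.  The function
   g = Σ_i x_i f_i has unit l²(μ)-norm by orthonormality, and on A we have
   g(v) = |F(v)| <x, F(v)/|F(v)|>.  For unit vectors y, z with
   min(|y - z|, |y + z|) <= r one has <y, z>² >= 1 - r², so (1 - r²) E_S = (1 - r²) E_A <= ‖g‖² = 1,
   while E_V = Σ_i ‖f_i‖² = k. *)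

Section Euclidean.
Variables (R : realType) (k : nat).
Implicit Types x y : 'I_k -> R.

Definition dotv x y : R := \sum_(i < k) x i * y i.

Lemma enorm_ge0 x : 0 <= enorm x.
Proof. exact: sqrtr_ge0. Qed.

Lemma sqr_enorm x : enorm x ^+ 2 = \sum_(i < k) x i ^+ 2.
Proof. by rewrite sqr_sqrtr // sumr_ge0 // => i _; exact: sqr_ge0. Qed.

Lemma sqr_enorm_gt0 x i : x i != 0 -> 0 < enorm x ^+ 2.
Proof.
move=> xi_neq0; rewrite sqr_enorm (bigD1 i) //=.
by rewrite ltr_wpDr ?sumr_ge0 // ?exprn_even_gt0 // => j _; exact: sqr_ge0.
Qed.

Lemma sqr_enormB x y :
  enorm (fun i => x i - y i) ^+ 2 = enorm x ^+ 2 + enorm y ^+ 2 - 2 * dotv x y.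
Proof.
rewrite !sqr_enorm /dotv; under eq_bigr do rewrite sqrrB -mulr_natr.
by rewrite !big_split /= sumrN -mulr_suml; lra.
Qed.

Lemma sqr_enormD x y :
  enorm (fun i => x i + y i) ^+ 2 = enorm x ^+ 2 + enorm y ^+ 2 + 2 * dotv x y.
Proof.
rewrite !sqr_enorm /dotv; under eq_bigr do rewrite sqrrD -mulr_natr.
by rewrite !big_split /= -mulr_suml; lra.
Qed.

(* |x ∓ y|² = 2 ∓ 2<x,y> <= r² forces |<x,y>| >= 1 - r²/2, and
   (1 - r²/2)² >= 1 - r²; when r² > 2 the bound is trivial. *)
Lemma sqr_dotv_ge x y r :
  enorm x = 1 -> enorm y = 1 ->
  Num.min (enorm (fun i => x i - y i)) (enorm (fun i => x i + y i)) <= r ->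
  1 - r ^+ 2 <= dotv x y ^+ 2.
Proof.
move=> x1 y1; rewrite ge_min => /orP[] le_r.
- have := enorm_ge0 (fun i => x i - y i).
  have := sqr_enormB x y; rewrite x1 y1; nra.
- have := enorm_ge0 (fun i => x i + y i).
  have := sqr_enormD x y; rewrite x1 y1; nra.
Qed.

End Euclidean.

Section Spectral.
Variables (R : realType) (V : finType) (w : V -> V -> R) (k : nat).
Variable f : 'I_k -> V -> R.
Implicit Types (u v : V) (A S : {set V}).

Lemma enorm_Fvec_eq0 v : v \notin support_F f -> enorm (Fvec f v) = 0.
Proof.
rewrite inE negb_exists => /forallP f_v0.
rewrite /enorm big1 ?sqrtr0 // => i _.
by move: (f_v0 i); rewrite negbK /Fvec => /eqP ->; rewrite expr0n.
Qed.

Lemma sqr_enorm_Fvec_gt0 v : v \in support_F f -> 0 < enorm (Fvec f v) ^+ 2.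
Proof. by rewrite inE => /existsP[i]; exact: sqr_enorm_gt0. Qed.

Lemma enorm_normalized u : u \in support_F f -> enorm (normalized f u) = 1.
Proof.
move=> /sqr_enorm_Fvec_gt0 Fu_gt0.
apply: (pexpIrn (ltn0Sn 1)); rewrite ?nnegrE ?enorm_ge0 // expr1n sqr_enorm.
under eq_bigr do rewrite /normalized expr_div_n.
by rewrite -mulr_suml -sqr_enorm divff // gt_eqF.
Qed.

Lemma dotv_normalized_Fvec u v : v \in support_F f ->
  dotv (normalized f u) (Fvec f v) =
  enorm (Fvec f v) * dotv (normalized f u) (normalized f v).
Proof.
move=> /sqr_enorm_Fvec_gt0; rewrite lt0r expf_eq0 /= => /andP[Fv_neq0 _].
rewrite /dotv mulr_sumr; apply: eq_bigr => i _.
by rewrite [normalized f v i]/normalized mulrCA [X in _ = _ * X]mulrC divfK.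
Qed.

Lemma energy_setIsupport S : energy w f S = energy w f (S :&: support_F f).
Proof.
rewrite /energy [LHS](bigID (mem (support_F f))) /= addrC big1 ?add0r.
  by apply: eq_bigl => v; rewrite !inE.
by move=> v /andP[_ vNF]; rewrite enorm_Fvec_eq0 // expr0n mulr0.
Qed.

Hypothesis orth : orthonormal_mu w f.

Lemma energy_setT : energy w f setT = k%:R.
Proof.
rewrite /energy; under eq_bigl do rewrite in_setT.
under eq_bigr do rewrite sqr_enorm mulr_sumr.
rewrite exchange_big /= -[k in k%:R]card_ord -sumr_const.
apply: eq_bigr => i _; move: (orth i i); rewrite eqxx /= mulr1n /inner_mu => <-.
by apply: eq_bigr => v _; rewrite /Fvec expr2 mulrA.
Qed.

(* [dotv x (Fvec f v)] is the value at v of Σ_i x_i f_i. *)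
Lemma sum_mu_sqr_comb x :
  \sum_v mu w v * dotv x (Fvec f v) ^+ 2 = enorm x ^+ 2.
Proof.
have expand v : mu w v * dotv x (Fvec f v) ^+ 2 =
    \sum_(i < k) \sum_(j < k) x i * x j * (mu w v * f i v * f j v).
  rewrite /dotv; move: (mu w v) => m; rewrite expr2 mulr_suml mulr_sumr.
  apply: eq_bigr => i _.
  by rewrite !mulr_sumr; apply: eq_bigr => j _; rewrite /Fvec; ring.
under eq_bigr do rewrite expand.
rewrite sqr_enorm exchange_big /=; apply: eq_bigr => i _.
rewrite exchange_big /=; under eq_bigr do rewrite -mulr_sumr.
rewrite (bigD1 i) //= [X in x i * x i * X]orth eqxx mulr1.
rewrite big1 ?addr0 ?expr2 // => j /negbTE neq_ji.
by rewrite [X in _ * X]orth eq_sym neq_ji mulr0.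
Qed.

Hypothesis mu_ge0 : forall v, 0 <= mu w v.

Lemma energy_cluster_le A u r :
  A \subset support_F f -> u \in A -> diam_le f A r ->
  (1 - r ^+ 2) * energy w f A <= 1.
Proof.
move=> /subsetP A_F uA diamA; have uF := A_F u uA.
have g_norm1 : \sum_v mu w v * dotv (normalized f u) (Fvec f v) ^+ 2 = 1.
  by rewrite sum_mu_sqr_comb enorm_normalized ?expr1n.
rewrite -[X in _ <= X]g_norm1 /energy mulr_sumr [X in _ <= X](bigID (mem A)) /=.
apply: ler_wpDr; first by apply: sumr_ge0 => v _; rewrite mulr_ge0 ?sqr_ge0.
apply: ler_sum => v vA.
rewrite mulrCA ler_wpM2l // dotv_normalized_Fvec ?A_F // exprMn mulrC.
rewrite ler_wpM2l ?sqr_ge0 // sqr_dotv_ge ?enorm_normalized ?A_F //.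
exact: diamA.
Qed.

End Spectral.

Theorem lemma5p2 (R : realType) (V : finType) (w : V -> V -> R) (k : nat)
  (f : 'I_k -> V -> R) (S : {set V}) (r : R) :
  weighted_graph w ->
  orthonormal_mu w f ->
  0 < r -> r < 1 ->
  diam_le f (S :&: support_F f) r ->
  energy w f S <= (k%:R * (1 - r ^+ 2))^-1 * energy w f setT.
Proof.
move=> [_ w_ge0] orth r_gt0 r_lt1 diamS.
have mu_ge0 v : 0 <= mu w v by apply: sumr_ge0.
have r2_gt0 : 0 < 1 - r ^+ 2 by nra.
rewrite energy_setT // energy_setIsupport.
have [->|/set0Pn[u uSF]] := eqVneq (S :&: support_F f) set0.
  by rewrite /energy big_set0 mulr_ge0 // invr_ge0 mulr_ge0 // ltW.
have k_gt0 : (0 < k)%N.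
  by move: uSF; rewrite !inE => /andP[_ /existsP[i _]]; exact: leq_ltn_trans (ltn_ord i).
have -> : (k%:R * (1 - r ^+ 2))^-1 * k%:R = (1 - r ^+ 2)^-1.
  by field; rewrite pnatr_eq0 -lt0n k_gt0 gt_eqF.
rewrite -[X in _ <= X]mulr1 ler_pdivlMl //.
exact: energy_cluster_le (subsetIr _ _) uSF diamS.
Qed.
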